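(* Let $u(x)=\dfrac{2}{f(x)}\exp\left(-\dfrac{x f(x)+x^2}{2}\right)$ for $0<x\le 1$. Then $u(x)<\sqrt{\pi/2}$ for all $x\in(0,1]$.
   Context: For $x\in(0,1]$, $f(x)$ denotes the unique number $y\in[1,\infty)$ with $x e^{-x^2/2}=y e^{-y^2/2}$ (this is well defined since $t\mapsto te^{-t^2/2}$ is strictly increasing on $(0,1)$, strictly decreasing on $(1,\infty)$ and tends to $0$ at $+\infty$). *)

From Stdlib Require Import Reals Lra ClassicalEpsilon.
Open Scope R_scope.

Definition g (t : R) : R := t * exp (- t ^ 2 / 2).

(* f(x) := the unique y in [1, +oo) with g x = g y (chosen by Hilbert's
   epsilon; the paper's well-definedness guarantees this is that y for x in (0,1]). *)
Definition f (x : R) : R :=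
  epsilon (inhabits 1) (fun y => 1 <= y /\ g x = g y).

Definition u (x : R) : R :=
  2 / f x * exp (- (x * f x + x ^ 2) / 2).

(* Write y = f x >= 1, so that u x = (2 / y) e^{-(x y + x^2)/2}.  For x >= 3/5 the
   exponential alone is small enough.  For smaller x, g x is small, and since g
   decreases on [1, +oo) the equation g y = g x forces y to be large (y >= 6/5,
   resp. y >= 8/5 for x <= 19/50), which makes the factor 2 / y small.  In all
   cases u x <= 5/4, and 5/4 < sqrt (PI / 2) because PI > 25/8. *)

From Stdlib Require Import Reals Lra ClassicalEpsilon.
Open Scope R_scope.

Lemma PI_gt_25_8 : 25 / 8 < PI.
Proof.
  destruct (PI_2_3_7_ineq 0) as [HPI _].
  unfold tg_alt, PI_2_3_7_tg, Ratan_seq in HPI; simpl in HPI.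
  lra.
Qed.

Lemma sqrt_PI_half_gt_5_4 : 5 / 4 < sqrt (PI / 2).
Proof.
  rewrite <- (sqrt_pow2 (5 / 4)) by lra.
  apply sqrt_lt_1_alt.
  pose proof PI_gt_25_8; lra.
Qed.

Lemma exp_INR_mul (n : nat) (a : R) : exp (INR n * a) = exp a ^ n.
Proof.
  induction n as [|n IHn]; simpl pow.
  - rewrite Rmult_0_l; exact exp_0.
  - rewrite S_INR, Rmult_plus_distr_r, Rmult_1_l, exp_plus, IHn; ring.
Qed.

Lemma pow_le_exp_INR_mul (n : nat) (a : R) :
  0 <= a -> (1 + a) ^ n <= exp (INR n * a).
Proof.
  intros Ha; rewrite exp_INR_mul.
  apply pow_incr; pose proof (exp_ineq1_le a); lra.
Qed.

Lemma exp_INR_mul_le_pow (n : nat) (a : R) :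
  0 <= a < 1 -> exp (INR n * a) <= (/ (1 - a)) ^ n.
Proof.
  intros Ha; rewrite exp_INR_mul.
  apply pow_incr; split; [left; apply exp_pos|].
  rewrite <- (Rinv_inv (exp a)), <- exp_Ropp.
  apply Rinv_le_contravar; [lra|].
  pose proof (exp_ineq1_le (- a)); lra.
Qed.

Lemma exp_le_exp_of_le (a b : R) : a <= b -> exp a <= exp b.
Proof.
  intros [Hlt|<-]; [left; apply exp_increasing; exact Hlt | lra].
Qed.

Lemma g_pos (t : R) : 0 < t -> 0 < g t.
Proof. intros Ht; unfold g; pose proof (exp_pos (- t ^ 2 / 2)); nra. Qed.

Lemma g_le_of_bounds (lo x hi : R) :
  0 <= lo <= x -> x <= hi -> g x <= hi * exp (- lo ^ 2 / 2).
Proof.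
  intros Hlo Hhi; unfold g.
  assert (Hexp : exp (- x ^ 2 / 2) <= exp (- lo ^ 2 / 2))
    by (apply exp_le_exp_of_le; nra).
  pose proof (exp_pos (- x ^ 2 / 2)); nra.
Qed.

(* With d = (b^2 - a^2)/2: e^{-a^2/2} = e^{-b^2/2} e^d and a e^d >= a (1 + d) >= b. *)
Lemma g_decreasing (a b : R) : 1 <= a -> a <= b -> g b <= g a.
Proof.
  intros Ha Hab; unfold g.
  set (d := (b ^ 2 - a ^ 2) / 2).
  replace (exp (- a ^ 2 / 2)) with (exp (- b ^ 2 / 2) * exp d)
    by (rewrite <- exp_plus; f_equal; unfold d; field).
  assert (Hd : b <= a * (1 + d)).
  { assert (0 <= (b - a) * (a * (a + b) / 2 - 1)) by (apply Rmult_le_pos; nra).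
    unfold d; nra. }
  assert (Hb : b <= a * exp d) by (pose proof (exp_ineq1_le d); nra).
  pose proof (exp_pos (- b ^ 2 / 2)); nra.
Qed.

Lemma g_le_g1 (x : R) : 0 < x <= 1 -> g x <= g 1.
Proof.
  intros Hx; unfold g.
  replace (exp (- 1 ^ 2 / 2)) with (exp (- x ^ 2 / 2) * exp ((x ^ 2 - 1) / 2))
    by (rewrite <- exp_plus; f_equal; field).
  assert (x <= exp ((x ^ 2 - 1) / 2)) by (pose proof (exp_ineq1_le ((x ^ 2 - 1) / 2)); nra).
  pose proof (exp_pos (- x ^ 2 / 2)); nra.
Qed.

(* g t <= 2 / t because e^{t^2/2} >= 1 + t^2/2 > t^2/2. *)
Lemma g_le_2_div (t : R) : 0 < t -> g t <= 2 / t.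
Proof.
  intros Ht; unfold g.
  assert (Hinv : exp (- t ^ 2 / 2) * exp (t ^ 2 / 2) = 1)
    by (rewrite <- exp_plus, <- exp_0; f_equal; field).
  pose proof (exp_ineq1_le (t ^ 2 / 2)); pose proof (exp_pos (- t ^ 2 / 2)).
  apply (Rmult_le_reg_r t); [exact Ht|].
  replace (2 / t * t) with 2 by (field; lra).
  nra.
Qed.

(* g x is bracketed by g 1 and g (max 1 (2 / g x)); apply the intermediate value theorem. *)
Lemma f_spec (x : R) : 0 < x <= 1 -> 1 <= f x /\ g x = g (f x).
Proof.
  intros Hx; unfold f; apply epsilon_spec.
  pose proof (g_pos x ltac:(lra)) as Hgx.
  set (Y := Rmax 1 (2 / g x)).
  assert (HY1 : 1 <= Y) by apply Rmax_l.
  assert (HgY : g Y <= g x).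
  { assert (H2 : 2 <= g x * Y).
    { replace 2 with (g x * (2 / g x)) at 1 by (field; lra).
      apply Rmult_le_compat_l; [lra | apply Rmax_r]. }
    apply (Rle_trans _ (2 / Y)); [apply g_le_2_div; lra|].
    apply (Rmult_le_reg_r Y); [lra|].
    replace (2 / Y * Y) with 2 by (field; lra); lra. }
  assert (Hcont : continuity (fun t => g t - g x)) by (unfold g; reg).
  destruct (IVT_cor (fun t => g t - g x) 1 Y Hcont HY1) as [z [Hz Hgz]].
  - pose proof (g_le_g1 x Hx); nra.
  - exists z; split; lra.
Qed.

Lemma le_f_of_g_lt (x c : R) : 0 < x <= 1 -> 1 <= c -> g x < g c -> c <= f x.
Proof.
  intros Hx Hc Hgc.
  destruct (f_spec x Hx) as [Hf Hgf].
  destruct (Rle_or_lt c (f x)) as [|Hlt]; [assumption|].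
  pose proof (g_decreasing (f x) c Hf (Rlt_le _ _ Hlt)); lra.
Qed.

Lemma u_le_of_bounds (x a c : R) :
  0 < x <= 1 -> 0 <= a <= x -> 1 <= c <= f x ->
  u x <= 2 / c * exp (- (a * c + a ^ 2) / 2).
Proof.
  intros Hx Ha Hc; unfold u.
  assert (Hinv : 2 / f x <= 2 / c).
  { unfold Rdiv; apply Rmult_le_compat_l; [lra|].
    apply Rinv_le_contravar; lra. }
  assert (Hexp : exp (- (x * f x + x ^ 2) / 2) <= exp (- (a * c + a ^ 2) / 2)).
  { apply exp_le_exp_of_le.
    assert (a * c <= x * f x) by (apply Rmult_le_compat; lra).
    assert (a ^ 2 <= x ^ 2) by (apply pow_incr; lra).
    lra. }
  apply Rmult_le_compat; [| left; apply exp_pos | exact Hinv | exact Hexp].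
  unfold Rdiv; apply Rmult_le_pos; [lra|].
  left; apply Rinv_0_lt_compat; lra.
Qed.

Lemma exp_12_25_ge : 8 / 5 <= exp (12 / 25).
Proof.
  replace (12 / 25) with (INR 16 * (3 / 100)) by (simpl; lra).
  eapply Rle_trans; [|apply pow_le_exp_INR_mul; lra].
  simpl; lra.
Qed.

Lemma exp_1501_5000_ge : 4 / 3 <= exp (1501 / 5000).
Proof.
  replace (1501 / 5000) with (INR 8 * (1501 / 40000)) by (simpl; lra).
  eapply Rle_trans; [|apply pow_le_exp_INR_mul; lra].
  simpl; lra.
Qed.

Lemma exp_3239_5000_lt : exp (3239 / 5000) < 2.
Proof.
  replace (3239 / 5000) with (INR 8 * (3239 / 40000)) by (simpl; lra).
  eapply Rle_lt_trans; [apply exp_INR_mul_le_pow; lra|].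
  simpl; lra.
Qed.

Lemma exp_32_25_lt : exp (32 / 25) < 80 / 19.
Proof.
  replace (32 / 25) with (INR 8 * (4 / 25)) by (simpl; lra).
  eapply Rle_lt_trans; [apply exp_INR_mul_le_pow; lra|].
  simpl; lra.
Qed.

Lemma u_le_5_4_large (x : R) : 3 / 5 <= x <= 1 -> u x <= 5 / 4.
Proof.
  intros Hx.
  assert (Hx' : 0 < x <= 1) by lra.
  pose proof (proj1 (f_spec x Hx')) as Hf.
  pose proof (u_le_of_bounds x (3 / 5) 1 Hx' ltac:(lra) ltac:(lra)) as Hu.
  replace (- (3 / 5 * 1 + (3 / 5) ^ 2) / 2) with (- (12 / 25)) in Hu by field.
  rewrite exp_Ropp in Hu.
  assert (/ exp (12 / 25) <= / (8 / 5))
    by (apply Rinv_le_contravar; [lra | exact exp_12_25_ge]).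
  lra.
Qed.

Lemma u_le_5_4_middle (x : R) : 19 / 50 <= x <= 3 / 5 -> u x <= 5 / 4.
Proof.
  intros Hx.
  assert (Hx' : 0 < x <= 1) by lra.
  assert (Hgx : g x < g (6 / 5)).
  { apply (Rle_lt_trans _ (3 / 5 * exp (- (19 / 50) ^ 2 / 2)));
      [apply g_le_of_bounds; lra|].
    unfold g.
    replace (- (19 / 50) ^ 2 / 2) with (- (6 / 5) ^ 2 / 2 + 3239 / 5000) by field.
    rewrite exp_plus.
    pose proof exp_3239_5000_lt; pose proof (exp_pos (- (6 / 5) ^ 2 / 2)).
    nra. }
  pose proof (le_f_of_g_lt x (6 / 5) Hx' ltac:(lra) Hgx) as Hf.
  pose proof (u_le_of_bounds x (19 / 50) (6 / 5) Hx' ltac:(lra) ltac:(lra)) as Hu.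
  replace (- (19 / 50 * (6 / 5) + (19 / 50) ^ 2) / 2) with (- (1501 / 5000)) in Hu
    by field.
  rewrite exp_Ropp in Hu.
  assert (/ exp (1501 / 5000) <= / (4 / 3))
    by (apply Rinv_le_contravar; [lra | exact exp_1501_5000_ge]).
  lra.
Qed.

Lemma u_le_5_4_small (x : R) : 0 < x <= 19 / 50 -> u x <= 5 / 4.
Proof.
  intros Hx.
  assert (Hx' : 0 < x <= 1) by lra.
  assert (Hgx : g x < g (8 / 5)).
  { apply (Rle_lt_trans _ (19 / 50 * exp (- 0 ^ 2 / 2)));
      [apply g_le_of_bounds; lra|].
    unfold g.
    replace (- 0 ^ 2 / 2) with 0 by field; rewrite exp_0.
    replace (- (8 / 5) ^ 2 / 2) with (- (32 / 25)) by field.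
    rewrite exp_Ropp.
    assert (/ (80 / 19) < / exp (32 / 25))
      by (apply Rinv_lt_contravar; [pose proof (exp_pos (32 / 25)); nra | exact exp_32_25_lt]).
    lra. }
  pose proof (le_f_of_g_lt x (8 / 5) Hx' ltac:(lra) Hgx) as Hf.
  pose proof (u_le_of_bounds x 0 (8 / 5) Hx' ltac:(lra) ltac:(lra)) as Hu.
  replace (- (0 * (8 / 5) + 0 ^ 2) / 2) with 0 in Hu by field.
  rewrite exp_0 in Hu.
  lra.
Qed.

Theorem lemma3p4 : forall x : R, 0 < x <= 1 -> u x < sqrt (PI / 2).
Proof.
  intros x Hx.
  apply (Rle_lt_trans _ (5 / 4)); [|exact sqrt_PI_half_gt_5_4].
  destruct (Rle_or_lt x (19 / 50)); [apply u_le_5_4_small; lra|].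
  destruct (Rle_or_lt x (3 / 5)); [apply u_le_5_4_middle; lra|].
  apply u_le_5_4_large; lra.
Qed.
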